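(* Let $K$ be an arbitrary field, $E$ an $n$-dimensional $K$-vector space ($n\ge1$), and $m=\lfloor n/2\rfloor+1$. Then $\bigwedge^mE\otimes\bigwedge^{n-m}E$ is spanned by the images of the maps $\psi(r,m)$, $1\le r\le m$.
   Context: For $1\le r\le m$, $\psi(r,m):\bigwedge^{m-r}E\otimes\bigwedge^{n-m+r}E\to\bigwedge^mE\otimes\bigwedge^{n-m}E$ is the composition of $1\otimes\Delta:\bigwedge^{m-r}E\otimes\bigwedge^{n-m+r}E\to\bigwedge^{m-r}E\otimes\bigwedge^rE\otimes\bigwedge^{n-m}E$, where $\Delta:\bigwedge^{n-m+r}E\to\bigwedge^rE\otimes\bigwedge^{n-m}E$ is the component of the comultiplication of the exterior algebra (i.e. $\Delta(v_1\wedge\dots\wedge v_k)=\sum_{S}\pm v_S\otimes v_{S^c}$ over $r$-element subsets $S\subset[1,k]$ with the shuffle sign), followed by exterior multiplication $\bigwedge^{m-r}E\otimes\bigwedge^rE\to\bigwedge^mE$ on the first two factors. *)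

From HB Require Import structures.
From mathcomp Require Import all_boot all_order all_algebra.
Set Implicit Arguments. Unset Strict Implicit. Unset Printing Implicit Defensive.
Import Order.TTheory GRing.Theory.
Local Open Scope ring_scope.

(* Model: E = K^n with standard basis e_0,...,e_{n-1}.
   The exterior algebra /\E has basis e_S (S : {set 'I_n}), e_S = e_{s1}/\.../\e_{sk}
   with s1 < ... < sk.  /\E (x) /\E has basis e_S (x) e_T, so its elements are
   coordinate functions on pairs (S,T).  /\^a E (x) /\^b E is the subspace of
   functions supported on pairs with #|S| = a, #|T| = b. *)

Notation pairT n := ({set 'I_n} * {set 'I_n})%type.

Notation tens_sp K n := {ffun pairT n -> K}.

Definition homog (K : fieldType) (n a b : nat) (x : tens_sp K n) : Prop :=
  forall A B : {set 'I_n}, x (A, B) != 0 -> #|A| = a /\ #|B| = b.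

Definition tens (K : fieldType) (n : nat) (S T : {set 'I_n}) : tens_sp K n :=
  [ffun p => (p == (S, T))%:R].

(* sign with e_S /\ e_T = sgn S T * e_{S u T} when S, T disjoint;
   also the shuffle sign of the comultiplication: e_U = sgn S (U\S) e_S /\ e_{U\S} *)
Definition sgn (K : fieldType) (n : nat) (S T : {set 'I_n}) : K :=
  (-1) ^+ #|[set p : 'I_n * 'I_n | [&& p.1 \in S, p.2 \in T & (p.2 < p.1)%N]]|.

(* psi(r,m) : /\^{m-r}E (x) /\^{n-m+r}E -> /\^m E (x) /\^{n-m} E, given on the
   basis: e_A (x) e_B |-> sum over r-subsets S of B of
   sgn S (B\S) * (e_A /\ e_S) (x) e_{B\S}, where e_A /\ e_S = 0 unless A, S are
   disjoint, and then equals sgn A S * e_{A u S}; extended linearly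
   (only the (m-r, n-m+r) component of the argument is used). *)
Definition psi (K : fieldType) (n r m : nat) (x : tens_sp K n) : tens_sp K n :=
  \sum_(A : {set 'I_n} | #|A| == (m - r)%N)
   \sum_(B : {set 'I_n} | #|B| == (n - m + r)%N)
    \sum_(S : {set 'I_n} | [&& S \subset B, #|S| == r & [disjoint A & S]])
      [ffun p => (x (A, B) * sgn K S (B :\: S) * sgn K A S) * tens K (A :|: S) (B :\: S) p].

From HB Require Import structures.
From mathcomp Require Import all_boot all_order all_algebra.
From mathcomp Require Import zify ring.
Import GRing.Theory.
Local Open Scope ring_scope.

Set Implicit Arguments. Unset Strict Implicit. Unset Printing Implicit Defensive.

(* Let e_A (x) e_B be a basis vector of /\^m E (x) /\^(n-m) E and R := A :\: B; since
   n - m < m we have #|B :\: A| < #|R|.  For V \subset R, psi_|V| applied to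
   e_(A\V) (x) e_(B u V) is, up to sign, the sum of the e_P (x) e_Q obtained by moving
   |V|-subsets of B u V back into A \ V.  In the alternating sum over V \subset R every
   e_P (x) e_Q cancels: if x \in P :&: R, adding x to V does not change the number of
   ways to reach it, and if P misses R it cannot be reached at all for cardinality
   reasons.  The summand V = set0 is +-e_A (x) e_B, so e_A (x) e_B is a combination of
   values of the psi(r,m) with r >= 1. *)

Section SetU1.
Variables (T : finType) (x : T).
Implicit Types A B S : {set T}.

Lemma setU1_subsetE S B : x \notin S -> (x |: S \subset x |: B) = (S \subset B).
Proof.
move=> xS; rewrite subUset sub1set setU11 /= -subDset.
by rewrite (setDidPl _) // disjoint_sym disjoints1.
Qed.

Lemma disjoint_setD1U1 A S : x \notin S -> [disjoint A :\ x & x |: S] = [disjoint A & S].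
Proof.
move=> xS; rewrite -!setI_eq0; congr (_ == _); apply/setP => y; rewrite !inE.
by case: (eqVneq y x) => [->|]; rewrite ?(negbTE xS) ?andbF.
Qed.

Lemma setD1U1 A S : x \in A -> A :\ x :|: (x |: S) = A :|: S.
Proof. by move=> xA; rewrite setUCA setUA setD1K. Qed.

Lemma setU1D B S : x \notin B -> (x |: B) :\: (x |: S) = B :\: S.
Proof.
move=> xB; apply/setP => y; rewrite !inE.
by case: (eqVneq y x) => [->|]; rewrite ?(negbTE xB) ?andbF.
Qed.

End SetU1.

Lemma alt_sum_subsets_eq0 (R : pzRingType) (T : finType) (X : {set T}) x
    (f : {set T} -> R) :
  x \in X -> (forall V : {set T}, V \subset X -> x \notin V -> f (x |: V) = f V) ->
  \sum_(V : {set T} | V \subset X) (-1) ^+ #|V| * f V = 0.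
Proof.
move=> xX fxV; rewrite (bigID (fun V : {set T} => x \in V)) /=.
rewrite (reindex_onto (fun V : {set T} => x |: V) (fun V : {set T} => V :\ x)) /=; last first.
  by move=> V /andP[_ xV]; apply: setD1K.
rewrite (eq_bigl (fun V : {set T} => (V \subset X) && (x \notin V))); last first.
  move=> V; rewrite subUset sub1set xX setU11 andbT.
  by congr andb; apply/eqP/idP => [<-|/setU1K //]; rewrite setD11.
rewrite -big_split big1 // => V /andP[VX xV] /=.
by rewrite cardsU1 xV fxV // exprS mulN1r mulNr addNr.
Qed.

Section PsiSpan.
Variables (K : fieldType) (n : nat).
Implicit Types (x y t : tens_sp K n) (c : K).

Definition scalet c t : tens_sp K n := [ffun p => c * t p].

Lemma psi0 r m : psi r m (0 : tens_sp K n) = 0.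
Proof.
apply/ffunP => p; rewrite /psi ffunE !sum_ffunE big1 // => A _.
rewrite sum_ffunE big1 // => B _; rewrite sum_ffunE big1 // => S _.
by rewrite !ffunE !mul0r.
Qed.

Lemma psiD r m x y : psi r m (x + y) = psi r m x + psi r m y.
Proof.
rewrite /psi -big_split; apply: eq_bigr => A _.
rewrite -big_split; apply: eq_bigr => B _.
rewrite -big_split; apply: eq_bigr => S _.
by apply/ffunP => p; rewrite !ffunE !mulrDl.
Qed.

Lemma psiZ r m c x : psi r m (scalet c x) = scalet c (psi r m x).
Proof.
apply/ffunP => p; rewrite /psi ffunE !sum_ffunE mulr_sumr; apply: eq_bigr => A _.
rewrite !sum_ffunE mulr_sumr; apply: eq_bigr => B _.
rewrite !sum_ffunE mulr_sumr; apply: eq_bigr => S _.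
by rewrite !ffunE !mulrA.
Qed.

Lemma homog0 a b : homog a b (0 : tens_sp K n).
Proof. by move=> A B; rewrite ffunE eqxx. Qed.

Lemma homogD a b x y : homog a b x -> homog a b y -> homog a b (x + y).
Proof.
move=> hx hy A B; rewrite ffunE.
by case: (eqVneq (x (A, B)) 0) => [->|/hx //]; rewrite add0r; apply: hy.
Qed.

Lemma homogZ a b c x : homog a b x -> homog a b (scalet c x).
Proof.
move=> hx A B; rewrite ffunE.
by case: (eqVneq (x (A, B)) 0) => [->|/hx //]; rewrite mulr0 eqxx.
Qed.

Lemma homog_tens (A B : {set 'I_n}) : homog #|A| #|B| (tens K A B).
Proof.
by move=> P Q; rewrite ffunE; case: ((P, Q) =P (A, B)) => [[-> ->] | _]; rewrite ?eqxx.
Qed.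

Lemma tens_expansion t : t = \sum_(p | t p != 0) scalet (t p) (tens K p.1 p.2).
Proof.
apply/ffunP => p; rewrite sum_ffunE; have [tp|tp] := eqVneq (t p) 0.
  rewrite tp big1 // => -[P Q] tPQ; rewrite !ffunE /=.
  by case: eqP => [pE|_]; [rewrite -pE tp eqxx in tPQ | rewrite mulr0].
rewrite (bigD1 p) //= big1 => [|[P Q] /andP[_ ne]].
  by rewrite !ffunE -surjective_pairing eqxx mulr1 addr0.
by rewrite !ffunE /= eq_sym (negbTE ne) mulr0.
Qed.

Definition psi_span m t :=
  exists xs : 'I_m.+1 -> tens_sp K n,
    (forall r : 'I_m.+1, (1 <= r)%N -> homog (m - r) (n - m + r) (xs r)) /\
    t = \sum_(r < m.+1 | (1 <= r)%N) psi r m (xs r).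

Lemma psi_span0 m : psi_span m 0.
Proof.
exists (fun _ => 0); split => [r _|]; first exact: homog0.
by rewrite big1 // => r _; rewrite psi0.
Qed.

Lemma psi_spanD m x y : psi_span m x -> psi_span m y -> psi_span m (x + y).
Proof.
move=> [xs [hx ->]] [ys [hy ->]]; exists (fun r => xs r + ys r); split.
  by move=> r hr; apply: homogD; [apply: hx | apply: hy].
by rewrite -big_split; apply: eq_bigr => r _; rewrite psiD.
Qed.

Lemma psi_spanZ m c x : psi_span m x -> psi_span m (scalet c x).
Proof.
move=> [xs [hx ->]]; exists (fun r => scalet c (xs r)); split.
  by move=> r hr; apply: homogZ; apply: hx.
apply/ffunP => p; rewrite ffunE !sum_ffunE mulr_sumr.
by apply: eq_bigr => r _; rewrite psiZ ffunE.
Qed.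

Lemma psi_span_sum m (I : finType) (P : pred I) (F : I -> tens_sp K n) :
  (forall i, P i -> psi_span m (F i)) -> psi_span m (\sum_(i | P i) F i).
Proof. by apply: big_ind; [apply: psi_span0 | apply: psi_spanD]. Qed.

Lemma psi_span_psi m r y : (1 <= r <= m)%N -> homog (m - r) (n - m + r) y ->
  psi_span m (psi r m y).
Proof.
move=> /andP[r_gt0 r_le_m] hy; have r_lt : (r < m.+1)%N by [].
exists (fun r' : 'I_m.+1 => if val r' == r then y else 0); split.
  by move=> r' _; case: eqP => [->|_] //; apply: homog0.
rewrite (bigD1 (Ordinal r_lt)) //= eqxx big1 ?addr0 // => r' /andP[_ r'_neq].
by rewrite ifN ?psi0 // -(inj_eq val_inj).
Qed.

End PsiSpan.

Section Signs.
Variables (K : fieldType) (n : nat).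
Implicit Types X Y S A B : {set 'I_n}.

Lemma sgn_sqr X Y : sgn K X Y * sgn K X Y = 1.
Proof. by rewrite /sgn -exprD addnn -mul2n exprM sqrrN !expr1n. Qed.

Lemma sgnUl X1 X2 Y : [disjoint X1 & X2] ->
  sgn K (X1 :|: X2) Y = sgn K X1 Y * sgn K X2 Y.
Proof.
move=> X12; rewrite /sgn -exprD -cardsUI.
rewrite (_ : _ :&: _ = set0) ?cards0 ?addn0; last first.
  apply/setP => p; rewrite !inE; apply/negbTE/and4P => -[/and3P[p1 _ _] p2 _ _].
  by rewrite (disjointFr X12 p1) in p2.
by congr (_ ^+ _); apply: eq_card => p; rewrite !inE andb_orl.
Qed.

Lemma sgnUr X Y1 Y2 : [disjoint Y1 & Y2] ->
  sgn K X (Y1 :|: Y2) = sgn K X Y1 * sgn K X Y2.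
Proof.
move=> Y12; rewrite /sgn -exprD -cardsUI.
rewrite (_ : _ :&: _ = set0) ?cards0 ?addn0; last first.
  apply/setP => p; rewrite !inE; apply/negbTE/and4P => -[/and3P[_ p1 _] _ p2 _].
  by rewrite (disjointFr Y12 p1) in p2.
by congr (_ ^+ _); apply: eq_card => p; rewrite !inE andb_orl andb_orr.
Qed.

(* The sign of moving e_S from the right factor of e_A (x) e_B to the left one. *)
Lemma sgn_move A B S : S \subset B -> [disjoint A & S] ->
  sgn K A B * (sgn K S (B :\: S) * sgn K A S) = sgn K (A :|: S) (B :\: S).
Proof.
move=> SB AS; have SBS : [disjoint S & B :\: S] by rewrite disjoints_subset setCD subsetUr.
have {1}-> : B = S :|: B :\: S by rewrite setDE setUIr setUCr setIT; apply/esym/setUidPr.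
rewrite sgnUr // sgnUl // -[RHS]mulr1 -(sgn_sqr A S); ring.
Qed.

End Signs.

Section Moves.
Variables (K : fieldType) (n : nat).
Implicit Types A B P Q S : {set 'I_n}.

Definition move_count A B (r : nat) P Q : K :=
  \sum_(S : {set 'I_n} | [&& S \subset B, #|S| == r & [disjoint A & S]])
    ((A :|: S, B :\: S) == (P, Q))%:R.

Lemma psi_tens_sgn r m A B P Q : #|A| = (m - r)%N -> #|B| = (n - m + r)%N ->
  sgn K A B * psi r m (tens K A B) (P, Q) = sgn K P Q * move_count A B r P Q.
Proof.
move=> cardA cardB; rewrite /psi sum_ffunE (bigD1 A) /=; last by rewrite cardA.
rewrite [X in _ + X]big1 ?addr0; last first.
  move=> A' /andP[_ A'A]; rewrite sum_ffunE big1 // => B' _.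
  by rewrite sum_ffunE big1 // => S _; rewrite !ffunE xpair_eqE (negbTE A'A) !mul0r.
rewrite sum_ffunE (bigD1 B) /=; last by rewrite cardB.
rewrite [X in _ + X]big1 ?addr0; last first.
  move=> B' /andP[_ B'B]; rewrite sum_ffunE big1 // => S _.
  by rewrite !ffunE xpair_eqE (negbTE B'B) andbF !mul0r.
rewrite sum_ffunE !mulr_sumr; apply: eq_bigr => S /and3P[SB _ AS].
rewrite !ffunE eqxx mul1r eq_sym; case: eqP => [[<- <-]|_]; last by rewrite !mulr0.
by rewrite !mulr1 sgn_move.
Qed.

Lemma move_count0 A B P Q : move_count A B 0 P Q = ((A, B) == (P, Q))%:R.
Proof.
rewrite /move_count (big_pred1 set0) ?setU0 ?setD0 // => S /=.
rewrite cards_eq0; case: eqP => [->|_]; last by rewrite /= andbF.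
by rewrite sub0set /= -setI_eq0 setI0 eqxx.
Qed.

Lemma move_count_setD1 A B r P Q x : x \in A -> x \notin B -> x \in P ->
  move_count A B r P Q = move_count (A :\ x) (x |: B) r.+1 P Q.
Proof.
move=> xA xB xP; rewrite /move_count.
rewrite [RHS](bigID (fun S : {set 'I_n} => x \in S)) /= [X in _ + X]big1 ?addr0; last first.
  move=> S /andP[_ xS]; rewrite xpair_eqE; case: eqP => [PE|_] //.
  by move: xP; rewrite -PE !inE eqxx /= (negbTE xS).
rewrite [RHS](reindex_onto (fun S : {set 'I_n} => x |: S) (fun S => S :\ x)) /=; last first.
  by move=> S /andP[_ xS]; apply: setD1K.
symmetry; apply: eq_big => [S|S /andP[_ /eqP SE]].
  have [xS|xS] := boolP (x \in S).
    have -> : (S \subset B) = false by apply: contraNF xB => /subsetP; apply.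
    have -> : ((x |: S) :\ x == S) = false by apply: contraTF xS => /eqP <-; rewrite setD11.
    by rewrite andbF.
  by rewrite setU1K // eqxx setU11 !andbT cardsU1 xS eqSS setU1_subsetE ?disjoint_setD1U1.
by rewrite -SE setD1U1 // setU1D.
Qed.

End Moves.

Section BasisVector.
Variables (K : fieldType) (n m : nat) (A B : {set 'I_n}).
Hypotheses (cardA : #|A| = m) (cardB : #|B| = (n - m)%N) (ltBA : (n - m < m)%N).
Implicit Types V P Q : {set 'I_n}.

Lemma card_setDV V : V \subset A :\: B -> #|A :\: V| = (m - #|V|)%N.
Proof.
by move=> VAB; rewrite cardsDS -?cardA //; apply: subset_trans VAB (subsetDl A B).
Qed.

Lemma card_setUV V : V \subset A :\: B -> #|B :|: V| = (n - m + #|V|)%N.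
Proof.
move=> VAB; rewrite -cardB -cardsUI (_ : B :&: V = set0) ?cards0 ?addn0 //.
apply/disjoint_setI0/(disjointWr VAB).
by rewrite disjoints_subset setCD subsetUr.
Qed.

Lemma card_setD_lt : (#|B :\: A| < #|A :\: B|)%N.
Proof. by move: (cardsID A B) (cardsID B A); rewrite setIC cardA cardB; lia. Qed.

Lemma move_count_toggle V P Q x : x \in A :\: B -> x \in P -> x \notin V ->
  move_count K (A :\: V) (B :|: V) #|V| P Q
  = move_count K (A :\: (x |: V)) (B :|: (x |: V)) #|x |: V| P Q.
Proof.
rewrite inE => /andP[xB xA] xP xV.
rewrite cardsU1 xV add1n [B :|: (_ |: V)]setUCA (setUC [set x] V) -setDDl.
by apply: move_count_setD1; rewrite // ?inE ?negb_or ?xA ?xB ?xV.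
Qed.

Lemma move_count_eq0 V P Q : V \subset A :\: B -> [disjoint P & A :\: B] ->
  move_count K (A :\: V) (B :|: V) #|V| P Q = 0.
Proof.
move=> VAB PAB; rewrite /move_count big1 // => S /and3P[SBV /eqP cardS AVS].
rewrite xpair_eqE; case: eqP => [PE|_] //=.
have SBA : S \subset B :\: A.
  apply/subsetP => y yS.
  have yP : y \in P by rewrite -PE inE yS orbT.
  move: (subsetP SBV y yS) (disjointFl AVS yS) (disjointFr PAB yP).
  move/implyP: (subsetP VAB y); rewrite !inE.
  by case: (y \in A); case: (y \in B); case: (y \in V).
have ABV : A :\: B \subset V.
  apply/subsetP => y yAB; apply: contraFT (disjointFl PAB yAB) => yV.
  by case/setDP: yAB => yA _; rewrite -PE !inE yV yA.
have := card_setD_lt; have := subset_leq_card SBA; have := subset_leq_card ABV.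
by rewrite cardS; lia.
Qed.

Lemma alt_sum_move_count P Q :
  \sum_(V : {set 'I_n} | V \subset A :\: B)
    (-1) ^+ #|V| * move_count K (A :\: V) (B :|: V) #|V| P Q = 0.
Proof.
have [PAB|/pred0Pn[x /andP[xP xAB]]] := boolP [disjoint P & A :\: B].
  by rewrite big1 // => V VAB; rewrite move_count_eq0 // mulr0.
apply: (alt_sum_subsets_eq0 xAB) => V _ xV.
by rewrite -move_count_toggle.
Qed.

Definition move_term V : tens_sp K n :=
  scalet ((-1) ^+ #|V| * sgn K (A :\: V) (B :|: V))
    (psi #|V| m (tens K (A :\: V) (B :|: V))).

Lemma move_termE V P Q : V \subset A :\: B ->
  move_term V (P, Q)
  = sgn K P Q * ((-1) ^+ #|V| * move_count K (A :\: V) (B :|: V) #|V| P Q).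
Proof.
move=> VAB; rewrite ffunE -mulrA psi_tens_sgn ?card_setDV ?card_setUV //.
by rewrite mulrCA.
Qed.

Lemma sum_move_terms : \sum_(V : {set 'I_n} | V \subset A :\: B) move_term V = 0.
Proof.
apply/ffunP => -[P Q]; rewrite sum_ffunE ffunE.
rewrite (eq_bigr _ (fun V VAB => move_termE P Q VAB)).
by rewrite -mulr_sumr alt_sum_move_count mulr0.
Qed.

Lemma psi_span_tens : psi_span m (tens K A B).
Proof.
have tens_move_terms : tens K A B =
    scalet (- sgn K A B)
      (\sum_(V : {set 'I_n} | (V \subset A :\: B) && (V != set0)) move_term V).
  have := sum_move_terms; rewrite (bigD1 set0) ?sub0set //= addrC => /eqP.
  rewrite addr_eq0 => /eqP ->; apply/ffunP => -[P Q].
  rewrite [in RHS]ffunE [in RHS]ffunE mulrNN ffunE.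
  rewrite move_termE ?sub0set // setD0 setU0 cards0 move_count0 expr0 mul1r eq_sym.
  by case: eqP => [[<- <-]|_]; rewrite ?mulr1 ?sgn_sqr ?mulr0.
rewrite tens_move_terms; apply/psi_spanZ/psi_span_sum => V /andP[VAB V0].
apply/psi_spanZ/psi_span_psi; last by rewrite -card_setDV // -card_setUV //; apply: homog_tens.
by rewrite card_gt0 V0 -cardA subset_leq_card // (subset_trans VAB) ?subsetDl.
Qed.

End BasisVector.

Theorem lemma5 (K : fieldType) (n : nat) (Hn : (1 <= n)%N) :
  let m := (n./2).+1 in
  forall t : tens_sp K n, homog m (n - m) t ->
  exists xs : 'I_m.+1 -> tens_sp K n,
    (forall r : 'I_m.+1, (1 <= r)%N -> homog (m - r) (n - m + r) (xs r)) /\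
    t = \sum_(r < m.+1 | (1 <= r)%N) psi r m (xs r).
Proof.
move=> m t homt; have ltBA : (n - m < m)%N by move: (odd_double_half n); rewrite /m; lia.
suff : psi_span m t by [].
rewrite (tens_expansion t); apply: psi_span_sum => -[P Q] /= tPQ.
have [cardP cardQ] := homt P Q tPQ.
exact/psi_spanZ/psi_span_tens.
Qed.
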